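(* In the setting below, let $i_1,\dots,i_m\in I$ and set $i_r':=(g_{i_1}g_{i_2}\cdots g_{i_{r-1}})(i_r)\in S$ for $1\le r\le m$. (1) If $i_r'=i_{r+1}'$ for some $r$, then there are $j_1,\dots,j_{m-2}\in I$ with $l_{j_1}\cdots l_{j_{m-2}}=l_{i_1}\cdots l_{i_m}$ in $L$ such that $j_k'=i_k'$ for $1\le k\le r-1$ and $j_k'=i_{k+2}'$ for $r\le k\le m-2$ (where $j_k'$ is defined from $j_1,\dots,j_k$ in the same way). (2) If $i_r'$ and $i_{r+1}'$ commute in $W$, then there are $j_1,\dots,j_m\in I$ with $l_{j_1}\cdots l_{j_m}=l_{i_1}\cdots l_{i_m}$ in $L$ such that $j_k'=i_k'$ for $k\ne r,r+1$, $j_r'=i_{r+1}'$ and $j_{r+1}'=i_r'$.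
   Context: Setting: $(W,S)$ is a right-angled Coxeter system (all off-diagonal Coxeter matrix entries in $\{2,\infty\}$), $G$ is a subgroup of $\mathrm{Aut}(W,S)$ (automorphisms of $W$ mapping $S$ bijectively to $S$), $I\subset S$, and $\{g_i\}_{i\in I}$ is a family of involutions in $G$ such that: (i) $g_i(s)\in S$ for all $i\in I$, $s\in S$; (ii) for all $i,j\in I$ with $ij=ji$, either [$g_i(j)\in I$, $g_j(i)=i$ and $g_{g_i(j)}=g_ig_jg_i$] or [$g_j(i)\in I$, $g_i(j)=j$ and $g_{g_j(i)}=g_jg_ig_j$]; (iii) $g_i(i)=i$ for all $i\in I$. $L$ is the group generated by symbols $l_i$, $i\in I$, subject to $l_i^2=1$ for all $i$, and $l_il_j=l_{g_i(j)}l_i$ whenever $ij=ji$, $g_j(i)=i$, $g_i(j)\in I$ and $g_{g_i(j)}=g_ig_jg_i$. *)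

From mathcomp Require Import all_boot.
Set Implicit Arguments. Unset Strict Implicit. Unset Printing Implicit Defensive.

(* Equality in a group given by a presentation with involutive generators
   (every generator x satisfies x^2 = 1 among the relations), realised as the
   congruence closure on words of the relation set R (each pair (u,v) in R is
   a defining relation u = v). *)
Inductive cong_closure (X : Type) (R : seq X -> seq X -> Prop)
  : seq X -> seq X -> Prop :=
| cc_rel u v : R u v -> cong_closure R u v
| cc_refl u : cong_closure R u u
| cc_sym u v : cong_closure R u v -> cong_closure R v u
| cc_trans u v w : cong_closure R u v -> cong_closure R v w -> cong_closure R u w
| cc_ctx a b u v : cong_closure R u v -> cong_closure R (a ++ u ++ b) (a ++ v ++ b).

(* Coxeter matrix m : S -> S -> option nat, with None standing for infinity.
   Right-angled: m s s = 1, symmetric, off-diagonal entries in {2, oo}. *)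
Definition right_angled_coxeter_matrix (S : Type) (m : S -> S -> option nat) :=
  [/\ forall s, m s s = Some 1,
      forall s t, m s t = m t s &
      forall s t, s <> t -> m s t = Some 2 \/ m s t = None].

Definition coxeter_rel (S : Type) (m : S -> S -> option nat) (u v : seq S) : Prop :=
  v = [::] /\ exists s t k, m s t = Some k /\ u = flatten (nseq k [:: s; t]).

Definition W_eq (S : Type) (m : S -> S -> option nat) := cong_closure (coxeter_rel m).

Definition W_commute (S : Type) (m : S -> S -> option nat) (s t : S) :=
  W_eq m [:: s; t] [:: t; s].

(* f : S -> S is (the restriction to S of) an automorphism of W mapping S
   bijectively onto S: f is a bijection of S whose induced map on words
   descends to a well-defined injective endomorphism of W (surjective since
   S generates W). *)
Definition is_autWS (S : Type) (m : S -> S -> option nat) (f : S -> S) :=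
  bijective f /\ forall u v, W_eq m u v <-> W_eq m (map f u) (map f v).

Definition all_in (S : Type) (I : S -> Prop) (l : seq S) : Prop :=
  foldr (fun x P => I x /\ P) True l.

(* Defining relations of L (generator l_i represented by the letter i \in I). *)
Definition L_rel (S : Type) (m : S -> S -> option nat) (I : S -> Prop)
    (g : S -> S -> S) (u v : seq S) : Prop :=
  (exists i, I i /\ u = [:: i; i] /\ v = [::]) \/
  (exists i j, I i /\ I j /\ W_commute m i j /\ g j i = i /\ I (g i j) /\
     (forall s, g (g i j) s = g i (g j (g i s))) /\
     u = [:: i; j] /\ v = [:: g i j; i]).

Definition L_eq (S : Type) (m : S -> S -> option nat) (I : S -> Prop)
    (g : S -> S -> S) := cong_closure (L_rel m I g).

(* primed g [:: i_1; ...; i_m] = [:: i_1'; ...; i_m'] with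
   i_r' = (g_{i_1} ... g_{i_{r-1}})(i_r). *)
Fixpoint primed (S : Type) (g : S -> S -> S) (l : seq S) : seq S :=
  if l is i :: l' then i :: map (g i) (primed g l') else [::].

From mathcomp Require Import all_boot.
Set Implicit Arguments.
Unset Strict Implicit.
Unset Printing Implicit Defensive.

(* Writing g_p for the composite g_{i_1} ... g_{i_k} along a word p, the primed
   word of p ++ [:: i; j] ++ q is that of p, followed by g_p(i), g_p(g_i(j)), and
   the primed word of q transported by g_p g_i g_j.  Everything therefore
   happens inside the two-letter block [:: i; j].  If its two primed letters
   agree, injectivity of g_p forces g_i(j) = i, hence j = i and l_i l_i = 1
   deletes the block.  If they commute in W, then so do i and j (the g_k are
   automorphisms of W fixing k), and condition (ii) provides the defining
   relation of L that rewrites l_i l_j as l_{i'} l_{j'} with i' = g_i(j),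
   g_{i'}(j') = i and g_{i'} g_{j'} = g_i g_j: the two primed letters are
   swapped and the rest of the primed word is unchanged. *)

Section PrimedWords.

Variables (S : Type) (g : S -> S -> S).

Fixpoint gcomp (p : seq S) : S -> S :=
  if p is i :: p' then fun s => g i (gcomp p' s) else id.

Lemma size_primed p : size (primed g p) = size p.
Proof. by elim: p => [|i p IHp] //=; rewrite size_map IHp. Qed.

Lemma primed_cat p q :
  primed g (p ++ q) = primed g p ++ map (gcomp p) (primed g q).
Proof.
elim: p => [|i p IHp] /=; first by rewrite map_id.
by rewrite IHp map_cat -map_comp.
Qed.

Lemma primed_block p i j q :
  primed g (p ++ [:: i; j] ++ q) =
  primed g p ++ [:: gcomp p i; gcomp p (g i j)] ++
  map (gcomp p \o (g i \o g j)) (primed g q).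
Proof. by rewrite primed_cat /= -!map_comp. Qed.

Lemma primed_split2 ws a b x y :
  primed g ws = a ++ [:: x; y] ++ b ->
  exists p i j q, [/\ ws = p ++ [:: i; j] ++ q, primed g p = a,
    x = gcomp p i, y = gcomp p (g i j) &
    b = map (gcomp p \o (g i \o g j)) (primed g q)].
Proof.
move=> Ews.
set p := take (size a) ws.
have le_a_ws : size a <= size ws.
  by rewrite -(size_primed ws) Ews size_cat leq_addr.
have size_p : size (primed g p) = size a.
  by rewrite size_primed size_take_min (minn_idPl le_a_ws).
have Esplit : primed g p ++ map (gcomp p) (primed g (drop (size a) ws)) =
               a ++ [:: x; y] ++ b.
  by rewrite -primed_cat cat_take_drop.
have Ep : primed g p = a.
  by move: (congr1 (take (size a)) Esplit); rewrite !take_size_cat.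
have Erest : map (gcomp p) (primed g (drop (size a) ws)) = [:: x; y] ++ b.
  by move: (congr1 (drop (size a)) Esplit); rewrite !drop_size_cat.
case Edrop: (drop (size a) ws) Erest => [|i [|j q]] //= [Ex Ey Eb].
exists p, i, j, q; split=> //; last by rewrite -Eb -!map_comp.
by rewrite -Edrop cat_take_drop.
Qed.

End PrimedWords.

Section Swaps.

Variables (S : Type) (m : S -> S -> option nat) (I : S -> Prop) (g : S -> S -> S).

Hypothesis Haut : forall i, I i -> is_autWS m (g i).
Hypothesis Hinv : forall i, I i -> forall s, g i (g i s) = s.
Hypothesis Hii : forall i j, I i -> I j -> W_commute m i j ->
  (I (g i j) /\ g j i = i /\ (forall s, g (g i j) s = g i (g j (g i s)))) \/
  (I (g j i) /\ g i j = j /\ (forall s, g (g j i) s = g j (g i (g j s)))).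
Hypothesis Hiii : forall i, I i -> g i i = i.

Lemma all_in_cat p q : all_in I (p ++ q) <-> all_in I p /\ all_in I q.
Proof. by elim: p => [|i p IHp] /=; [tauto | move: IHp; tauto]. Qed.

Lemma gcomp_inj p : all_in I p -> injective (gcomp g p).
Proof.
elim: p => [_ s t //|i p IHp [Ii Ip] s t /= Est].
by apply: (IHp Ip); rewrite -(Hinv Ii (gcomp g p s)) Est Hinv.
Qed.

Lemma autWS_commute f a b :
  is_autWS m f -> W_commute m (f a) (f b) <-> W_commute m a b.
Proof. by move=> [_ Hf]; split=> C; [apply/Hf | apply/(Hf [:: a; b] [:: b; a])]. Qed.

Lemma W_commute_gcomp p a b :
  all_in I p -> W_commute m (gcomp g p a) (gcomp g p b) -> W_commute m a b.
Proof.
elim: p => [//|i p IHp [Ii Ip] /= C].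
by apply: (IHp Ip); apply/(autWS_commute _ _ (Haut Ii)).
Qed.

Lemma L_eq_cancel a b i :
  I i -> L_eq m I g (a ++ b) (a ++ [:: i; i] ++ b).
Proof.
move=> Ii; rewrite -[a ++ b]/(a ++ [::] ++ b).
by apply/cc_ctx/cc_sym/cc_rel; left; exists i.
Qed.

Lemma L_eq_swap i j :
  I i -> I j -> W_commute m i j ->
  exists j', [/\ I (g i j), I j', L_eq m I g [:: g i j; j'] [:: i; j],
    g (g i j) j' = i & g (g i j) \o g j' =1 g i \o g j].
Proof.
move=> Ii Ij Cij.
case: (Hii Ii Ij Cij) => [[Igij [gji gij_conj]] | [Igji [gij gji_conj]]].
- exists i; split=> //.
  + by apply/cc_sym/cc_rel; right; exists i, j.
  + by rewrite gij_conj Hiii // gji Hiii.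
  + by move=> s /=; rewrite gij_conj Hinv.
- have Cjgji : W_commute m j (g j i).
    by apply/(autWS_commute _ _ (Haut Ij)); rewrite Hinv // Hiii //; apply: cc_sym.
  exists (g j i); rewrite gij; split=> //.
  (* The relation used is l_j l_{g_j i} = l_{g_j (g_j i)} l_j, i.e. l_i l_j. *)
  + rewrite -[in X in L_eq _ _ _ _ X](Hinv Ij i).
    apply: cc_rel; right; exists j, (g j i); rewrite Hinv //.
    do !split=> //; first by rewrite gji_conj Hiii // gij Hiii.
    by move=> s; rewrite gji_conj !Hinv.
  + by rewrite Hinv.
  + by move=> s /=; rewrite gji_conj !Hinv.
Qed.

End Swaps.

Theorem lemma2 (S : Type) (m : S -> S -> option nat) (I : S -> Prop)
  (g : S -> S -> S)
  (Hm : right_angled_coxeter_matrix m)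
  (Haut : forall i, I i -> is_autWS m (g i))
  (Hinv : forall i, I i -> forall s, g i (g i s) = s)
  (Hnontriv : forall i, I i -> exists s, g i s <> s)
  (Hii : forall i j, I i -> I j -> W_commute m i j ->
     (I (g i j) /\ g j i = i /\ (forall s, g (g i j) s = g i (g j (g i s)))) \/
     (I (g j i) /\ g i j = j /\ (forall s, g (g j i) s = g j (g i (g j s)))))
  (Hiii : forall i, I i -> g i i = i) :
  (forall (ws : seq S) (a b : seq S) (x : S),
     all_in I ws -> primed g ws = a ++ [:: x; x] ++ b ->
     exists js : seq S, [/\ all_in I js, L_eq m I g js ws & primed g js = a ++ b])
  /\
  (forall (ws : seq S) (a b : seq S) (x y : S),
     all_in I ws -> primed g ws = a ++ [:: x; y] ++ b -> W_commute m x y ->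
     exists js : seq S, [/\ all_in I js, L_eq m I g js ws & primed g js = a ++ [:: y; x] ++ b]).
Proof.
split.
- move=> ws a b x Iws /(@primed_split2 _ g) [p [i [j [q [Ews Ea Ex Ey Eb]]]]].
  subst a b x.
  move: Iws; rewrite Ews => /all_in_cat [Ip /all_in_cat [[Ii [Ij _]] Iq]].
  have gij : g i j = i by apply: (gcomp_inj Hinv Ip).
  have -> : j = i by rewrite -(Hinv i Ii j) gij Hiii.
  exists (p ++ q); split; first by apply/all_in_cat.
    exact: L_eq_cancel.
  by rewrite primed_cat; congr (_ ++ _); apply: eq_map => s /=; rewrite Hinv.
- move=> ws a b x y Iws /(@primed_split2 _ g) [p [i [j [q [Ews Ea Ex Ey Eb]]]]] Cxy.
  subst a b x y.
  move: Iws; rewrite Ews => /all_in_cat [Ip /all_in_cat [[Ii [Ij _]] Iq]].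
  have Cij : W_commute m i j.
    have Cigij := W_commute_gcomp Haut Ip Cxy.
    by move/(autWS_commute _ _ (Haut i Ii)): Cigij; rewrite Hiii // Hinv.
  have [j' [Igij Ij' Lswap gij' gcomp_eq]] := L_eq_swap Haut Hinv Hii Hiii Ii Ij Cij.
  exists (p ++ [:: g i j; j'] ++ q); split.
  + by apply/all_in_cat; split=> //; apply/all_in_cat.
  + exact: cc_ctx.
  + by rewrite primed_block gij'; congr (_ ++ _ ++ _); apply: eq_map => s; exact: (congr1 (gcomp g p) (gcomp_eq s)).
Qed.
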